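(* Let $d\ge 2$ and $N\ge 2$ be integers, let $X=\{x^1,\dots,x^N\}\subseteq\mathbb{R}^d$, and let $C\subseteq\mathbb{R}^d$ be a proper closed convex cone which is pointed (i.e. $C\cap(-C)=\{0\}$) and polyhedral (i.e. an intersection of finitely many closed halfspaces). If $\bar x\in X$ satisfies $r_{X,C}(\bar x)=\max_{x\in X} r_{X,C}(x)$, then $\bar x$ is maximal in $X$ with respect to $\leq_C$. The converse is not true in general: there exist such $X$ and $C$ and an element of $X$ that is maximal in $X$ with respect to $\leq_C$ but does not maximize $r_{X,C}$ over $X$.
   Context: A proper closed convex cone $C\subseteq\mathbb{R}^d$ is a closed set with $sC=C$ for all $s\ge 0$, $C+C=C$, and $C\notin\{\varnothing,\mathbb{R}^d\}$; it induces the preorder $y\leq_C z$ iff $z-y\in C$. The dual cone is $C^+=\{v\in\mathbb{R}^d\mid \forall z\in C: v^\top z\ge 0\}$, and for $w\in\mathbb{R}^d$, $H^+(w)=\{z\in\mathbb{R}^d\mid w^\top z\ge 0\}$. The cone ranking function is $r_{X,C}(z)=\min_{w\in C^+}\#\{x\in X\mid w^\top x\le w^\top z\}$ for $z\in\mathbb{R}^d$ ($\#$ = cardinality). A point $\bar x\in X$ is maximal in $X$ with respect to $\leq_C$ if for every $x\in X$ with $\bar x\leq_C x$ one has $x\leq_C\bar x$. *)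

From HB Require Import structures.
From mathcomp Require Import all_boot all_order all_algebra.
From mathcomp Require Import all_classical all_reals all_analysis.
Set Implicit Arguments. Unset Strict Implicit. Unset Printing Implicit Defensive.
Import Order.TTheory GRing.Theory Num.Theory numFieldNormedType.Exports.
Local Open Scope classical_set_scope.
Local Open Scope ring_scope.

Section Defs.
Variables (R : realType) (d : nat).

Definition dotv (w z : 'rV[R]_d) : R := \sum_(i < d) w 0 i * z 0 i.

Definition proper_closed_convex_cone (C : set 'rV[R]_d) : Prop :=
  [/\ closed C,
      (forall s z, 0 <= s -> C z -> C (s *: z)),
      (forall y z, C y -> C z -> C (y + z)),
      C !=set0 & C <> setT].

Definition pointed_cone (C : set 'rV[R]_d) : Prop :=
  forall z, C z -> C (- z) -> z = 0.

Definition polyhedral (C : set 'rV[R]_d) : Prop :=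
  exists (k : nat) (a : 'I_k -> 'rV[R]_d) (b : 'I_k -> R),
    C = [set z | forall j, dotv (a j) z <= b j].

Definition cone_le (C : set 'rV[R]_d) (y z : 'rV[R]_d) : Prop := C (z - y).

Definition dual_cone (C : set 'rV[R]_d) : set 'rV[R]_d :=
  [set v | forall z, C z -> 0 <= dotv v z].

(* #{x in X | w^T x <= w^T z}, X = {x i | i < N} with x injective *)
Definition count_below (N : nat) (x : 'I_N -> 'rV[R]_d) (w z : 'rV[R]_d) : nat :=
  #|[set i : 'I_N | dotv w (x i) <= dotv w z]|.

Definition rank_pred (C : set 'rV[R]_d) (N : nat) (x : 'I_N -> 'rV[R]_d)
  (z : 'rV[R]_d) : pred nat :=
  fun n => `[< exists w, dual_cone C w /\ count_below x w z = n >].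

Lemma rank_pred_ex C N (x : 'I_N -> 'rV[R]_d) z : exists n, rank_pred C x z n.
Proof.
exists (count_below x 0 z); apply/asboolP; exists 0; split => //.
by move=> y _; rewrite /dotv big1 // => i _; rewrite mxE mul0r.
Qed.

(* r_{X,C}(z) = min_{w in C^+} #{x in X | w^T x <= w^T z} *)
Definition cone_rank C N (x : 'I_N -> 'rV[R]_d) (z : 'rV[R]_d) : nat :=
  ex_minn (rank_pred_ex C x z).

Definition maximal_in C N (x : 'I_N -> 'rV[R]_d) (xbar : 'rV[R]_d) : Prop :=
  forall i, cone_le C xbar (x i) -> cone_le C (x i) xbar.

End Defs.

(* Suppose x_i >=_C xbar but not x_i <=_C xbar.  As C is polyhedral, some
   v in C^+ separates strictly: v^T x_i > v^T xbar.  Take w in C^+ attaining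
   r(x_i) and tilt it to w' = t w + v with t large: for t large, every x_k
   above x_i for w stays above x_i for w', so #{k | w'^T x_k <= w'^T x_i} is
   at most r(x_i), while xbar now lies strictly below x_i for w', so
   r(xbar) <= #{k | w'^T x_k <= w'^T xbar} < r(x_i), contradicting the
   maximality of r(xbar).  For the converse, in the nonnegative quadrant of
   R^2 with X = {0, e_1, (2,-1)}, the point (2,-1) is maximal yet has rank 1
   (take w = e_2), while e_1 has rank 2 since 0 <=_C e_1. *)

From HB Require Import structures.
From mathcomp Require Import all_boot all_order all_algebra.
From mathcomp Require Import all_classical all_reals all_analysis.
Set Implicit Arguments. Unset Strict Implicit. Unset Printing Implicit Defensive.
Import Order.TTheory GRing.Theory Num.Theory numFieldNormedType.Exports.
Local Open Scope classical_set_scope.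
Local Open Scope ring_scope.

Section DotProduct.
Variables (R : realType) (d : nat).
Implicit Types (a b w z : 'rV[R]_d).

Lemma dotvDl a b z : dotv (a + b) z = dotv a z + dotv b z.
Proof. by rewrite /dotv -big_split; apply: eq_bigr => i _; rewrite !mxE mulrDl. Qed.

Lemma dotvZl t a z : dotv (t *: a) z = t * dotv a z.
Proof. by rewrite /dotv mulr_sumr; apply: eq_bigr => i _; rewrite !mxE mulrA. Qed.

Lemma dotvNl a z : dotv (- a) z = - dotv a z.
Proof. by rewrite /dotv -sumrN; apply: eq_bigr => i _; rewrite !mxE mulNr. Qed.

Lemma dotvZr w t z : dotv w (t *: z) = t * dotv w z.
Proof. by rewrite /dotv mulr_sumr; apply: eq_bigr => i _; rewrite !mxE mulrCA. Qed.

Lemma dotvBr w a b : dotv w (a - b) = dotv w a - dotv w b.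
Proof. by rewrite /dotv -sumrB; apply: eq_bigr => i _; rewrite !mxE mulrBr. Qed.

Lemma dotv0r w : dotv w 0 = 0.
Proof. by rewrite -(scale0r 0) dotvZr mul0r. Qed.

Lemma dotv_delta_mx (j : 'I_d) z : dotv (delta_mx 0 j) z = z 0 j.
Proof.
rewrite /dotv (bigD1 j) //= big1 ?addr0; first by rewrite mxE !eqxx mul1r.
by move=> i /negPf ij; rewrite mxE ij andbF mul0r.
Qed.

End DotProduct.

Section ConeRank.
Variables (R : realType) (d N : nat) (C : set 'rV[R]_d) (x : 'I_N -> 'rV[R]_d).

Lemma cone_rank_le_count z w :
  dual_cone C w -> (cone_rank C x z <= count_below x w z)%N.
Proof. by move=> Cw; rewrite /cone_rank; case: ex_minnP => m _; apply; apply/asboolP; exists w. Qed.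

Lemma cone_rank_attained z :
  exists2 w, dual_cone C w & count_below x w z = cone_rank C x z.
Proof. by rewrite /cone_rank; case: ex_minnP => m /asboolP[w []] Cw <- _; exists w. Qed.

Lemma card_cone_below_le_cone_rank z :
  (#|[set i | cone_le C (x i) z]| <= cone_rank C x z)%N.
Proof.
have [w Cw <-] := cone_rank_attained z; apply: subset_leq_card.
apply/fintype.subsetP => i; rewrite !in_setE /= => below.
by rewrite -subr_ge0 -dotvBr; apply: Cw.
Qed.

Lemma count_below_lt w y i :
  dotv w y < dotv w (x i) -> (count_below x w y < count_below x w (x i))%N.
Proof.
move=> lt_y_i; apply: proper_card; apply/properP; split.
  by apply/fintype.subsetP => k; rewrite !in_setE /= => /le_trans; apply; apply: ltW.
by exists i; rewrite !unfold_in /= !asboolb ?lexx // -ltNge.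
Qed.

Lemma dual_cone_conic t w v :
  0 <= t -> dual_cone C w -> dual_cone C v -> dual_cone C (t *: w + v).
Proof.
move=> t_ge0 Cw Cv z Cz; rewrite dotvDl dotvZl.
by apply: addr_ge0 (Cv z Cz); apply: mulr_ge0 (Cw z Cz).
Qed.

End ConeRank.

Lemma large_multiple_dominates (R : realFieldType) (I : finType) (g h : I -> R) :
  exists2 t, 0 <= t & forall k, 0 < g k -> 0 < t * g k + h k.
Proof.
pose t := 1 + \sum_(k | 0 < g k) `|h k| / g k.
have ratio_le k : 0 < g k -> `|h k| / g k <= t - 1.
  move=> gk; rewrite addrC addKr (bigD1 k) //= lerDl.
  by apply: sumr_ge0 => l /andP[gl _]; rewrite divr_ge0 // ltW.
exists t; first by rewrite addr_ge0 // sumr_ge0 // => k gk; rewrite divr_ge0 // ltW.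
move=> k gk; have := ratio_le k gk; rewrite ler_pdivrMr // => hk.
have := ler_norm (- h k); rewrite normrN => Nh_le.
rewrite -[t](subrK 1) mulrDl mul1r addrAC ltr_wpDl // -[h k]opprK subr_ge0.
exact: le_trans Nh_le hk.
Qed.

Lemma count_below_tilt (R : realType) d N (x : 'I_N -> 'rV[R]_d) w v z :
  exists2 t, 0 <= t & (count_below x (t *: w + v) z <= count_below x w z)%N.
Proof.
have [t t_ge0 dom] := large_multiple_dominates
  (fun k => dotv w (x k - z)) (fun k => dotv v (x k - z)).
exists t => //; apply: subset_leq_card; apply/fintype.subsetP => k; rewrite !in_setE /=.
apply: contraTT; rewrite -!ltNge => above_w.
by rewrite -subr_gt0 -dotvBr dotvDl dotvZl dom // dotvBr subr_gt0.
Qed.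

Section PolyhedralCone.
Variables (R : realType) (d : nat) (C : set 'rV[R]_d).
Hypothesis C_scale : forall s z, 0 <= s -> C z -> C (s *: z).
Hypothesis C_neq0 : C !=set0.
Hypothesis C_polyhedral : polyhedral C.

Lemma polyhedral_cone_homogeneous :
  exists k (a : 'I_k -> 'rV[R]_d), C = [set z | forall j, dotv (a j) z <= 0].
Proof.
have [k [a [b defC]]] := C_polyhedral; exists k, a.
have C0 : C 0 by have [z Cz] := C_neq0; rewrite -(scale0r z); apply: C_scale.
have b_ge0 j : 0 <= b j by move: C0; rewrite defC => /(_ j); rewrite dotv0r.
apply/seteqP; split => z; last by rewrite defC => az j; apply: le_trans (az j) _.
move=> Cz j; rewrite leNgt; apply/negP => az_gt0.
have : C (((b j + 1) / dotv (a j) z) *: z).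
  by apply: C_scale Cz; rewrite divr_ge0 ?ltW // ltr_wpDl.
by rewrite defC => /(_ j); rewrite dotvZr mulfVK ?gt_eqF // gerDl ler10.
Qed.

Lemma polyhedral_cone_separation z :
  ~ C z -> exists2 v, dual_cone C v & dotv v z < 0.
Proof.
have [k [a ->]] := polyhedral_cone_homogeneous.
move=> /existsNP[j /negP]; rewrite -ltNge => az_gt0.
exists (- a j); last by rewrite dotvNl oppr_lt0.
by move=> y /(_ j) ay; rewrite dotvNl oppr_ge0.
Qed.

Lemma cone_rank_argmax_maximal N (x : 'I_N -> 'rV[R]_d) ibar :
  (forall i, (cone_rank C x (x i) <= cone_rank C x (x ibar))%N) ->
  maximal_in C x (x ibar).
Proof.
move=> rank_max i above; apply: contrapT => /polyhedral_cone_separation[v Cv v_neg].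
have [w Cw count_w] := cone_rank_attained C x (x i).
have [t t_ge0 count_tilt] := count_below_tilt x w v (x i).
have tilted_lt : dotv (t *: w + v) (x ibar) < dotv (t *: w + v) (x i).
  rewrite -subr_gt0 -dotvBr dotvDl dotvZl ltr_wpDl ?mulr_ge0 ?Cw //.
  by rewrite dotvBr -opprB -dotvBr oppr_gt0.
have := cone_rank_le_count x (x ibar) (dual_cone_conic t_ge0 Cw Cv).
move=> /leq_ltn_trans /(_ (count_below_lt tilted_lt)) /leq_trans /(_ count_tilt).
by rewrite count_w ltnNge rank_max.
Qed.

End PolyhedralCone.

Section Orthant.
Variables (R : realType) (d : nat).

Definition orthant : set 'rV[R]_d := [set z | forall j, 0 <= z 0 j].

Lemma orthant_proper : (0 < d)%N -> proper_closed_convex_cone orthant.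
Proof.
move=> d_gt0; split.
- rewrite (_ : orthant = \bigcap_(j in setT) ((fun z : 'rV[R]_d => z 0 j) @^-1` [set r | 0 <= r])).
    apply: closed_bigI => j _; apply: preimage_closed; last exact: closed_ge.
    by move=> z _; exact: coord_continuous.
  by apply/seteqP; split => z /= z_ge0 j => [_|]; apply: z_ge0.
- by move=> s z s_ge0 z_ge0 j; rewrite mxE mulr_ge0.
- by move=> y z y_ge0 z_ge0 j; rewrite mxE addr_ge0.
- by exists 0 => j; rewrite mxE.
- move=> orthantT; have : orthant (const_mx (-1)) by rewrite orthantT.
  by move=> /(_ (Ordinal d_gt0)); rewrite mxE ler0N1.
Qed.

Lemma orthant_pointed : pointed_cone orthant.
Proof.
move=> z z_ge0 Nz_ge0; apply/matrixP => i j; rewrite ord1 mxE.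
have := Nz_ge0 j; rewrite mxE oppr_ge0 => z_le0.
by apply/eqP; rewrite eq_le z_le0 z_ge0.
Qed.

Lemma orthant_polyhedral : polyhedral orthant.
Proof.
exists d, (fun j => - delta_mx 0 j), (fun _ => 0).
by apply/seteqP; split => z /= z_ge0 j; have := z_ge0 j; rewrite dotvNl dotv_delta_mx oppr_le0.
Qed.

Lemma orthant_leP y z : cone_le orthant y z <-> forall j, y 0 j <= z 0 j.
Proof. by split => le_yz j; have := le_yz j; rewrite !mxE subr_ge0. Qed.

Lemma delta_mx_dual_orthant j : dual_cone orthant (delta_mx 0 j).
Proof. by move=> z; rewrite dotv_delta_mx. Qed.

End Orthant.

Section Example.
Variable R : realType.

Definition example_point (k : 'I_3) : 'rV[R]_2 :=
  \row_j (nth [::] [:: [:: 0; 0]; [:: 1; 0]; [:: 2; -1]] k)`_j.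

Let x := example_point.
Let i0 : 'I_3 := ord0.
Let i1 : 'I_3 := Ordinal (isT : (1 < 3)%N).
Let ibar : 'I_3 := ord_max.

Lemma example_point_first_coord k : x k 0 0 = k%:R.
Proof. by rewrite mxE; case: k => [[|[|[|k]]] //]. Qed.

Lemma example_point_inj : injective x.
Proof.
move=> k l /(congr1 (fun z : 'rV[R]_2 => z 0 0)); rewrite !example_point_first_coord.
by move=> /eqP; rewrite eqr_nat => /eqP /val_inj.
Qed.

Lemma example_maximal : maximal_in (@orthant R 2) x (x ibar).
Proof.
move=> k /orthant_leP /(_ 0); rewrite !example_point_first_coord ler_nat => le2k.
have -> : k = ibar by apply/val_inj/anti_leq; rewrite -ltnS ltn_ord.
by rewrite /cone_le subrr => j; rewrite mxE.
Qed.

Lemma example_rank_ibar : (cone_rank (@orthant R 2) x (x ibar) <= 1)%N.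
Proof.
apply: leq_trans (cone_rank_le_count x (x ibar) (delta_mx_dual_orthant 1)) _.
apply: leq_trans (subset_leq_card (B := pred1 ibar) _) _; last by rewrite card1.
apply/fintype.subsetP => k; rewrite in_setE /= !dotv_delta_mx !mxE /=.
by case: k => [[|[|[|k]]] ?] //=; rewrite ler0N1.
Qed.

Lemma example_rank_i1 : (2 <= cone_rank (@orthant R 2) x (x i1))%N.
Proof.
apply: leq_trans (card_cone_below_le_cone_rank _ _ (x i1)).
apply: leq_trans (subset_leq_card (A := [set i0; i1]%SET) _); first by rewrite cards2.
apply/fintype.subsetP => k.
rewrite !inE /= => /orP[] /eqP ->; apply/orthant_leP => j; rewrite !mxE //.
by case: j => [[|[|j]] //= _]; rewrite ?ler01.
Qed.

End Example.

Theorem theorem2p3 (R : realType) :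
  (forall (d N : nat) (x : 'I_N -> 'rV[R]_d) (C : set 'rV[R]_d) (ibar : 'I_N),
    (2 <= d)%N -> (2 <= N)%N -> injective x ->
    proper_closed_convex_cone C -> pointed_cone C -> polyhedral C ->
    (forall i, (cone_rank C x (x i) <= cone_rank C x (x ibar))%N) ->
    maximal_in C x (x ibar))
  /\
  (exists (d N : nat) (x : 'I_N -> 'rV[R]_d) (C : set 'rV[R]_d) (ibar : 'I_N),
    [/\ (2 <= d)%N, (2 <= N)%N & injective x] /\
    [/\ proper_closed_convex_cone C, pointed_cone C & polyhedral C] /\
    maximal_in C x (x ibar) /\
    exists i, (cone_rank C x (x ibar) < cone_rank C x (x i))%N).
Proof.
split.
  move=> d N x C ibar _ _ _ [_ C_scale _ C_neq0 _] _ C_polyhedral.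
  exact: cone_rank_argmax_maximal.
exists 2%N, 3%N, (@example_point R), (@orthant R 2), ord_max.
split; first by split => //; exact: example_point_inj.
split; first by split; [exact: orthant_proper | exact: orthant_pointed | exact: orthant_polyhedral].
split; first exact: example_maximal.
exists (Ordinal (isT : (1 < 3)%N)).
exact: leq_ltn_trans (example_rank_ibar R) (example_rank_i1 R).
Qed.
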